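(* Let $k,\ell\in\mathbb{N}$ and let $V$ be a finite set with $|V|\ge 2k\ge 2\ell$. For any function $f\colon\binom{V}{k}\to\mathbb{R}$, the following are equivalent: (i) $W^k(f)=W^{k-1}(f)=\cdots=W^{\ell}(f)=0$; (ii) there exists a unique function $h\colon\binom{V}{\ell-1}\to\mathbb{R}$ such that for all $R\in\binom{V}{k}$, $f(R)=\sum_{S\subset R,\,|S|=\ell-1}h(S)$.
   Context: $\binom{X}{k}$ denotes the family of $k$-element subsets of $X$. An $s$-permutation of $V$ is a sequence of $s$ distinct elements of $V$. For $k,r\in\mathbb{N}$, a finite set $V$ with $|V|\ge 2k\ge 2r$ and $f\colon\binom{V}{k}\to\mathbb{R}$, the level-$r$ weight of $f$ is \[ W^r(f)=\left(\mathbb{E}_{(a_1,b_1,\ldots,a_r,b_r)}\Big(\mathbb{E}_{R}\,(-1)^{|R\cap\{b_1,\ldots,b_r\}|}f(R)\Big)^2\right)^{1/2}, \] where $(a_1,b_1,\ldots,a_r,b_r)$ is a uniformly random $2r$-permutation of $V$, and, given it, $R$ is a uniformly random $k$-subset of $V$ with $|R\cap\{a_i,b_i\}|=1$ for each $i\in[r]$. *)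

From HB Require Import structures.
From mathcomp Require Import all_boot all_order all_algebra.
From mathcomp Require Import reals.
Set Implicit Arguments. Unset Strict Implicit. Unset Printing Implicit Defensive.
Import Order.TTheory GRing.Theory Num.Theory.
Local Open Scope ring_scope.

Section Weights.
Variables (R : realType) (V : finType).

Definition avg (T : finType) (A : {set T}) (F : T -> R) : R :=
  (\sum_(x in A) F x) / #|A|%:R.

(* A 2r-permutation (a_1,b_1,...,a_r,b_r) of V is encoded as an injective
   map p : 'I_r * bool -> V with a_i = p (i,false), b_i = p (i,true). *)
Definition perms (r : nat) : {set {ffun 'I_r * bool -> V}} :=
  [set p : {ffun 'I_r * bool -> V} | injectiveb p].

Definition pa r (p : {ffun 'I_r * bool -> V}) (i : 'I_r) : V := p (i, false).
Definition pb r (p : {ffun 'I_r * bool -> V}) (i : 'I_r) : V := p (i, true).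

Definition goodR (k r : nat) (p : {ffun 'I_r * bool -> V}) : {set {set V}} :=
  [set S : {set V} | (#|S| == k) &&
     [forall i : 'I_r, #|S :&: [set pa p i; pb p i]| == 1%N]].

(* f : binom(V,k) -> R is represented by a function on {set V};
   only its values on k-sets matter. *)
Definition inner (k r : nat) (f : {set V} -> R) (p : {ffun 'I_r * bool -> V}) : R :=
  avg (goodR k p)
    (fun S => (-1) ^+ #|S :&: [set pb p i | i : 'I_r]| * f S).

Definition W (k r : nat) (f : {set V} -> R) : R :=
  Num.sqrt (avg (perms r) (fun p => (inner k f p) ^+ 2)).

(* f(R) = sum over S ⊆ R with |S| = l-1 of h(S), for all k-sets R.
   (|S| = l-1 is written #|S|.+1 = l, so that for l = 0 the family
   binom(V,-1) is empty.) *)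
Definition represents (k l : nat) (f h : {set V} -> R) : Prop :=
  forall T : {set V}, #|T| = k ->
    f T = \sum_(S : {set V} | (S \subset T) && (#|S|.+1 == l)) h S.

End Weights.

From HB Require Import structures.
From mathcomp Require Import all_boot all_order all_algebra.
From mathcomp Require Import reals.
From mathcomp Require Import zify.
Import Order.TTheory GRing.Theory Num.Theory.
Local Open Scope ring_scope.

Set Implicit Arguments. Unset Strict Implicit. Unset Printing Implicit Defensive.

(* For a 2r-permutation with pairs (a_i, b_i), the inner average of W^r(f) is,
   up to normalisation, the sum over the k-sets T avoiding every a_i and b_i of
   the r-fold difference of f along the pairs, evaluated at T.
   (ii) => (i): a sum of h over (l-1)-subsets is killed by r >= l differences,
   since some pair misses each (l-1)-set.
   (i) => (ii): descend from r = k+1, where h = f.  If f is the sum of h over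
   r-subsets and W^r(f) = 0, all r-fold differences of h on r-sets vanish.  Such
   an h is itself a sum over (r-1)-subsets (induction on r and on the ground set,
   splitting off one point), and summing an (r-1)-subset sum over the r-subsets
   of a k-set only multiplies it by k-r+1.
   Uniqueness: if the sums of g over the j-subsets of all k-sets vanish, with
   j <= k and j + k <= |V|, then by induction g(v ∪ B) - g(w ∪ B) vanishes, so g
   is constant on j-sets, hence zero. *)

Section FinsetFacts.
Variable V : finType.
Implicit Types (a : V) (A P S T X : {set V}).

Lemma subset_setU1 a A S : a \notin A -> (A \subset a |: S) = (A \subset S).
Proof.
move=> aA; rewrite -subDset (setDidPl _) //.
by rewrite disjoint_sym disjoints1.
Qed.

Lemma disjoint_setU1 a T P : a \notin P -> [disjoint T & P] -> [disjoint a |: T & P].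
Proof. by move=> aP; rewrite !disjoints_subset subUset sub1set inE aP. Qed.

Lemma card_setI_setU1 a P S :
  a \notin P -> #|S :&: (a |: P)| = ((a \in S) + #|S :&: P|)%N.
Proof.
move=> aP; have [aS|aS] := boolP (a \in S).
  have -> : S :&: (a |: P) = a |: (S :&: P).
    by apply/setP => x; rewrite !inE; case: (x =P a) => [->|]; rewrite ?aS.
  by rewrite cardsU1 inE (negbTE aP) andbF.
have -> // : S :&: (a |: P) = S :&: P.
by apply/setP => x; rewrite !inE; case: (x =P a) => [->|]; rewrite ?(negbTE aS).
Qed.

Lemma card_setI2_eq1 a b S :
  a != b -> (#|S :&: [set a; b]| == 1%N) = ((a \in S) != (b \in S)).
Proof.
move=> ab; rewrite card_setI_setU1 ?inE // -(setU0 [set b]) card_setI_setU1 ?inE //.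
by rewrite setI0 cards0 addn0; case: (a \in S); case: (b \in S).
Qed.

Lemma notin_subsetD1 a A S : A \subset S :\ a -> a \notin A.
Proof. by move=> /subsetP AS; apply/negP => /AS; rewrite setD11. Qed.

Lemma exists_subset X n :
  (n <= #|X|)%N -> exists2 A : {set V}, A \subset X & #|A| = n.
Proof.
move=> leX; exists [set x in take n (enum X)].
  by apply/subsetP => x; rewrite inE => /mem_take; rewrite mem_enum.
rewrite cardsE (card_uniqP (take_uniq _ (enum_uniq _))).
by rewrite size_take -cardE; case: ltngtP leX => // ->.
Qed.

End FinsetFacts.

Section Subsums.
Variables (V : finType) (R : pzRingType).
Implicit Types (A B S X : {set V}) (g : {set V} -> R).

(* As in [represents], the index is one more than the size of the summed
   subsets, so that [subsum 0] is the empty sum. *)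
Definition subsum (m : nat) g S : R :=
  \sum_(A : {set V} | (A \subset S) && (#|A|.+1 == m)%N) g A.

Lemma eq_subsum m g1 g2 S :
  (forall A, A \subset S -> #|A|.+1 = m -> g1 A = g2 A) ->
  subsum m g1 S = subsum m g2 S.
Proof. by move=> eq_g; apply: eq_bigr => A /andP[AS /eqP /(eq_g _ AS)]. Qed.

Lemma subsumD m g1 g2 S :
  subsum m (fun A => g1 A + g2 A) S = subsum m g1 S + subsum m g2 S.
Proof. exact: big_split. Qed.

Lemma subsumB m g1 g2 S :
  subsum m (fun A => g1 A - g2 A) S = subsum m g1 S - subsum m g2 S.
Proof. exact: sumrB. Qed.

Lemma subsumZ m c g S : subsum m (fun A => c * g A) S = c * subsum m g S.
Proof. by rewrite /subsum mulr_sumr. Qed.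

Lemma subsum0 g S : subsum 0 g S = 0.
Proof. by rewrite /subsum big1 // => A /andP[]. Qed.

Lemma subsum1 g S : subsum 1 g S = g set0.
Proof.
rewrite /subsum (big_pred1 set0) // => A /=.
by rewrite eqSS cards_eq0 andb_idl // => /eqP->; rewrite sub0set.
Qed.

Lemma subsum_full m g S : #|S|.+1 = m -> subsum m g S = g S.
Proof.
move=> <-; rewrite /subsum (big_pred1 S) // => A /=; rewrite eqSS.
apply/andP/eqP => [[sAS /eqP cA]|->]; last by rewrite subxx.
by apply/eqP; rewrite eqEcard sAS cA /=.
Qed.

Lemma subsum_setU1 m g v X : v \notin X ->
  subsum m.+1 g (v |: X) = subsum m.+1 g X + subsum m (fun B => g (v |: B)) X.
Proof.
move=> vX; rewrite /subsum (bigID (fun A => v \in A)) /= addrC; congr (_ + _).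
  apply: eq_bigl => A; apply/andP/andP => [[/andP[sA cA] vA]|[sA cA]].
    split=> //; apply/subsetP => x xA; have := subsetP sA x xA.
    by rewrite in_setU1 => /orP[/eqP ex|//]; rewrite -ex xA in vA.
  split; first by rewrite (subset_trans sA) ?subsetU1 ?cA.
  by apply: contra vX => /(subsetP sA).
rewrite (reindex_onto (fun B => v |: B) (fun A => A :\ v)) /=; last first.
  by move=> A /andP[_ vA]; rewrite setD1K.
apply: eq_bigl => B; rewrite setU11 andbT.
have [vB|vB] := boolP (v \in B).
  have /negbTE-> : (v |: B) :\ v != B by apply: contraTneq vB => <-; rewrite setD11.
  rewrite andbF; case: (boolP (B \subset X)) => // /subsetP/(_ v vB) vX'.
  by rewrite vX' in vX.
rewrite setU1K // eqxx cardsU1 vB andbT eqSS; congr (_ && _).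
apply/idP/idP => [sB|]; last exact: setUS.
apply/subsetP => x xB; move/subsetP/(_ x): sB; rewrite !in_setU1 xB orbT.
by case/(_ isT)/orP => // /eqP ex; rewrite -ex xB in vB.
Qed.

Lemma card_supersets1 S B : B \subset S ->
  #|[set A : {set V} | [&& A \subset S, #|A| == #|B|.+1 & B \subset A]]| = (#|S| - #|B|)%N.
Proof.
move=> sBS.
have -> : [set A : {set V} | [&& A \subset S, #|A| == #|B|.+1 & B \subset A]] =
          [set x |: B | x in S :\: B].
  apply/setP => A; rewrite inE; apply/and3P/imsetP => [[sAS cA sBA]|[x]].
    have : #|A :\: B| == 1%N by rewrite cardsD (setIidPr sBA) (eqP cA) subSnn.
    case/cards1P => x ex; exists x.
      have : x \in A :\: B by rewrite ex set11.
      by rewrite !inE => /andP[-> /(subsetP sAS) ->].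
    by rewrite -{1}(setID A B) (setIidPr sBA) ex setUC.
  rewrite inE => /andP[xB xS] ->; split.
  - by rewrite subUset sub1set xS sBS.
  - by rewrite cardsU1 xB.
  - exact: subsetU1.
rewrite card_in_imset ?cardsD ?(setIidPr sBS) //.
move=> x y; rewrite !inE => /andP[xB _] /andP[yB _] e.
have : x \in y |: B by rewrite -e setU11.
by rewrite in_setU1 (negbTE xB) orbF => /eqP.
Qed.

(* Each [(m-1)]-subset of [S] lies in [#|S| - (m-1)] subsets of size [m]. *)
Lemma subsum_subsum m g S :
  subsum m.+1 (subsum m g) S = (#|S| - m.-1)%:R * subsum m g S.
Proof.
case: m => [|m]; first by rewrite subsum0 mulr0 /subsum big1 // => A _; apply: subsum0.
rewrite /subsum /= (exchange_big_dep (fun B => (B \subset S) && (#|B|.+1 == m.+1)%N)) /=;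
  last by move=> A B /andP[sAS _] /andP[sBA ->]; rewrite (subset_trans sBA sAS).
rewrite mulr_sumr; apply: eq_bigr => B /andP[sBS /eqP [cB]].
rewrite sumr_const mulr_natl -cB -(card_supersets1 sBS); congr (_ *+ _).
by apply: eq_card => A; rewrite !inE unfold_in /= cB eqxx andbT eqSS andbA.
Qed.

End Subsums.

Section Differences.
Variables (V : finType) (R : pzRingType).
Implicit Types (a b v : V) (s : seq (V * V)) (A S T X : {set V}).
Implicit Types (F g : {set V} -> R).

Definition ends s : seq V := flatten [seq [:: x.1; x.2] | x <- s].
Definition endset s : {set V} := [set:: ends s].
Definition seconds s : {set V} := [set:: map snd s].
Definition splits s S := all (fun x => (x.1 \in S) != (x.2 \in S)) s.

Fixpoint delta s F T : R :=
  if s is x :: s' then delta s' F (x.1 |: T) - delta s' F (x.2 |: T) else F T.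

(* Up to the factor [#|goodR k p|], this is [inner k F p] for the permutation [p]
   with pairs [s]; see [inner_eq0]. *)
Definition split_sum s k F : R :=
  \sum_(S : {set V} | (#|S| == k) && splits s S) (-1) ^+ #|S :&: seconds s| * F S.

Lemma uniq_ends_cons a b s : uniq (ends ((a, b) :: s)) =
  [&& a != b, a \notin ends s, b \notin ends s & uniq (ends s)].
Proof. by rewrite /= inE negb_or -andbA. Qed.

Lemma endset_cons a b s : endset ((a, b) :: s) = a |: (b |: endset s).
Proof. by rewrite /endset !set_cons. Qed.

Lemma mem_ends s x : x \in s -> (x.1 \in ends s) && (x.2 \in ends s).
Proof.
move=> xs; apply/andP; split; apply/flattenP; exists [:: x.1; x.2];
  by [apply/mapP; exists x | rewrite !inE eqxx ?orbT].
Qed.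

Lemma seconds_cons a b s : seconds ((a, b) :: s) = b |: seconds s.
Proof. by rewrite /seconds set_cons. Qed.

Lemma seconds_sub s : seconds s \subset endset s.
Proof.
by apply/subsetP => y; rewrite !inE => /mapP[x /mem_ends/andP[_ ?] ->].
Qed.

Lemma card_endset s : uniq (ends s) -> #|endset s| = (2 * size s)%N.
Proof.
move=> us; rewrite cardsE (card_uniqP us).
by elim: s {us} => //= x s IHs; rewrite IHs mulnS.
Qed.

Lemma card_splits_endset s S :
  uniq (ends s) -> splits s S -> #|S :&: endset s| = size s.
Proof.
elim: s => [|[a b] s IHs]; first by rewrite /endset set_nil setI0 cards0.
rewrite uniq_ends_cons endset_cons => /and4P[ab aP bP us] /= /andP[sab ss].
have abP : a \notin b |: endset s by rewrite in_setU1 negb_or ab inE aP.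
rewrite card_setI_setU1 // card_setI_setU1 ?inE // IHs //.
by move: sab; case: (a \in S); case: (b \in S).
Qed.

Lemma eq_delta s F1 F2 T : F1 =1 F2 -> delta s F1 T = delta s F2 T.
Proof. by move=> eqF; elim: s T => [|x s IHs] T /=; rewrite ?eqF ?IHs. Qed.

Lemma delta0 s T : delta s (fun _ => 0) T = 0.
Proof. by elim: s T => [|x s IHs] T //=; rewrite !IHs subrr. Qed.

Lemma deltaB s F1 F2 T :
  delta s (fun S => F1 S - F2 S) T = delta s F1 T - delta s F2 T.
Proof.
elim: s T => [|x s IHs] T //=; rewrite !IHs !opprB addrACA [RHS]addrACA.
by rewrite [- _ + _]addrC.
Qed.

Lemma deltaZ s c F T : delta s (fun S => c * F S) T = c * delta s F T.
Proof. by elim: s T => [|x s IHs] T //=; rewrite !IHs mulrBr. Qed.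

Lemma delta_sum (I : Type) (r : seq I) (P : pred I) (G : I -> {set V} -> R) s T :
  delta s (fun S => \sum_(i <- r | P i) G i S) T = \sum_(i <- r | P i) delta s (G i) T.
Proof. by elim: s T => [|x s IHs] T //=; rewrite !IHs sumrB. Qed.

Lemma delta_setU1 s F v T : delta s (fun S => F (v |: S)) T = delta s F (v |: T).
Proof.
elim: s T => [|x s IHs] T //=.
by rewrite !IHs (setUCA [set v] [set x.1]) (setUCA [set v] [set x.2]).
Qed.

Lemma eq_delta_on s F1 F2 T X : uniq (ends s) ->
  T \subset X -> endset s \subset X -> [disjoint T & endset s] ->
  (forall S, S \subset X -> #|S| = (#|T| + size s)%N -> F1 S = F2 S) ->
  delta s F1 T = delta s F2 T.
Proof.
elim: s T => [|[a b] s IHs] T; first by move=> _ TX _ _ eqF /=; rewrite eqF ?addn0.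
rewrite uniq_ends_cons endset_cons => /and4P[_ aP bP us] TX.
rewrite !subUset !sub1set => /and3P[aX bX PX].
move=> dT eqF.
have aT : a \notin T by rewrite (disjointFl dT) // !inE eqxx.
have bT : b \notin T by rewrite (disjointFl dT) // !inE eqxx orbT.
have {}dT : [disjoint T & endset s] by apply: disjointWr dT; rewrite setUA subsetUr.
have dX c : c \in X -> c \notin T -> c \notin ends s ->
    delta s F1 (c |: T) = delta s F2 (c |: T).
  move=> cX cT cP; apply: IHs => //; first by rewrite subUset sub1set cX.
    by apply: disjoint_setU1; rewrite ?inE.
  by move=> S SX cS; apply: eqF; rewrite // cS cardsU1 cT addSn addnS.
by rewrite /= !dX.
Qed.

Lemma card_cover_pairs s A : uniq (ends s) ->
  (forall x, x \in s -> (x.1 \in A) || (x.2 \in A)) -> (size s <= #|A|)%N.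
Proof.
elim: s A => [|[a b] s IHs] A //; rewrite uniq_ends_cons => /and4P[_ aP bP us] cover.
have [y yA yP] : exists2 y, y \in A & y \notin ends s.
  by have /orP[] := cover (a, b) (mem_head _ _) => ?; [exists a | exists b].
rewrite (cardsD1 y A) yA ltnS; apply: IHs => // x xs.
have /andP[x1 x2] := mem_ends xs; have /memPn yP' := yP.
rewrite !in_setD1 (yP' _ x1) (yP' _ x2) /=.
by apply: cover; rewrite inE xs orbT.
Qed.

Lemma delta_indicator_subset s A a b T : (a, b) \in s -> a \notin A -> b \notin A ->
  delta s (fun S => (A \subset S)%:R) T = 0.
Proof.
move=> + aA bA; elim: s T => [|x s IHs] T //=; rewrite inE => /orP[/eqP <-|xs] /=.
  have inv c : c \notin A -> delta s (fun S => (A \subset S)%:R) (c |: T) =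
                             delta s (fun S => (A \subset S)%:R) T.
    by move=> cA; rewrite -delta_setU1; apply: eq_delta => S; rewrite subset_setU1.
  by rewrite !inv ?subrr.
by rewrite !IHs ?subrr.
Qed.

(* An [m]-subset sum is killed by [m] or more independent differences, since some
   pair of endpoints misses each of the summed [(m-1)]-subsets. *)
Lemma delta_subsum_small s m g T : uniq (ends s) -> (m <= size s)%N ->
  delta s (subsum m g) T = 0.
Proof.
move=> us ms.
have -> : delta s (subsum m g) T =
    delta s (fun S => \sum_(A : {set V} | (#|A|.+1 == m)%N) g A * (A \subset S)%:R) T.
  apply: eq_delta => S; rewrite /subsum big_mkcondl /=; apply: eq_bigr => A _.
  by case: (A \subset S); rewrite ?mulr1 ?mulr0.
rewrite delta_sum big1 // => A /eqP cA; rewrite deltaZ.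
have : ~~ all (fun x => (x.1 \in A) || (x.2 \in A)) s.
  by apply: contraL ms => /allP/(card_cover_pairs us); rewrite -ltnNge -cA ltnS.
case/allPn => -[a b] xs; rewrite negb_or => /andP[aA bA].
by rewrite (delta_indicator_subset _ xs aA bA) mulr0.
Qed.

Lemma delta_subsum_top s g T : uniq (ends s) -> [disjoint T & endset s] ->
  delta s (subsum (size s).+1 g) T = delta s g set0.
Proof.
elim: s T g => [|[a b] s IHs] T g; first by rewrite /= subsum1.
rewrite uniq_ends_cons endset_cons => /and4P[_ aP bP us] dT.
have aT : a \notin T by rewrite (disjointFl dT) // !inE eqxx.
have bT : b \notin T by rewrite (disjointFl dT) // !inE eqxx orbT.
have {}dT : [disjoint T & endset s] by apply: disjointWr dT; rewrite setUA subsetUr.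
rewrite /= -!delta_setU1 -!deltaB -(IHs T) //.
apply: (eq_delta_on (X := ~: [set a; b])) => //.
- apply/subsetP => x xT; rewrite !inE negb_or.
  by apply/andP; split; apply: contraTneq xT => ->.
- apply/subsetP => x xP; rewrite !inE negb_or.
  by apply/andP; split; apply: contraTneq xP => ->; rewrite inE.
move=> S; rewrite subsetC subUset !sub1set !inE => /andP[aS bS] _.
by rewrite subsumB !subsum_setU1 // opprD addrACA subrr add0r.
Qed.

Lemma setD_endset_cons a b s T S : a != b -> a \notin ends s -> b \notin ends s ->
  a \notin T -> b \notin T ->
  [&& S :\: endset ((a, b) :: s) == T, a \in S & b \notin S] = (S :\: endset s == a |: T).
Proof.
move=> ab aP bP aT bT; rewrite endset_cons.
apply/idP/eqP => [/and3P[/eqP <- aS bS]|eS].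
  apply/setP => x; rewrite !inE.
  case: (x =P a) => [->|_]; first by rewrite aS (negbTE aP).
  by case: (x =P b) => [->|_]; rewrite ?(negbTE bS) ?andbF.
have memS x : (x \in S) && (x \notin ends s) = (x == a) || (x \in T).
  by have := congr1 (fun A => x \in A) eS; rewrite !inE andbC.
have aS : a \in S by have := memS a; rewrite eqxx aP andbT.
have bS : b \notin S.
  by have := memS b; rewrite (negbTE bT) eq_sym (negbTE ab) bP andbT => ->.
rewrite aS bS !andbT; apply/eqP/setP => x; rewrite !inE.
case: (x =P a) => [->|/eqP xa]; first by rewrite (negbTE aT).
case: (x =P b) => [->|_] /=; first by rewrite (negbTE bT).
by rewrite andbC memS (negbTE xa).
Qed.

Lemma sign_seconds_cons a b s S : b \notin endset s ->
  (-1) ^+ #|S :&: seconds ((a, b) :: s)| =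
  (-1) ^+ (b \in S) * (-1) ^+ #|S :&: seconds s| :> R.
Proof.
move=> bP; rewrite seconds_cons card_setI_setU1 ?exprD //.
exact: contra (subsetP (seconds_sub s) b) bP.
Qed.

Lemma delta_as_sum s F T : uniq (ends s) -> [disjoint T & endset s] ->
  delta s F T = \sum_(S | (S :\: endset s == T) && splits s S)
                  (-1) ^+ #|S :&: seconds s| * F S.
Proof.
elim: s T => [|[a b] s IHs] T.
  move=> _ _; rewrite /= (big_pred1 T) => [|S]; last by rewrite /endset set_nil setD0 andbT.
  by rewrite /seconds set_nil setI0 cards0 mul1r.
rewrite uniq_ends_cons => /and4P[ab aP bP us] dT.
have aT : a \notin T by rewrite (disjointFl dT) // endset_cons !inE eqxx.
have bT : b \notin T by rewrite (disjointFl dT) // endset_cons !inE eqxx orbT.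
have {}dT : [disjoint T & endset s].
  by apply: disjointWr dT; rewrite endset_cons setUA subsetUr.
have bPs : b \notin endset s by rewrite inE.
rewrite /= !IHs ?disjoint_setU1 ?inE // [RHS](bigID (fun S => a \in S)) /= -sumrN.
congr (_ + _); apply: eq_big => S.
- rewrite -(setD_endset_cons (b := b)) //.
  by case: (a \in S); case: (b \in S); rewrite /= ?andbF ?andbT.
- rewrite -(setD_endset_cons (b := b)) // => /andP[/and3P[_ _ bS] _].
  by rewrite sign_seconds_cons // (negbTE bS) mul1r.
- have ba : b != a by rewrite eq_sym.
  rewrite -(@setD_endset_cons b a s T S) // endset_cons setUCA -endset_cons.
  by case: (a \in S); case: (b \in S); rewrite /= ?andbF ?andbT.
- move=> /andP[/eqP eS _].
  have /setDP[bS _] : b \in S :\: endset s by rewrite eS setU11.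
  by rewrite sign_seconds_cons // bS expr1 mulN1r mulNr.
Qed.

Lemma split_sum_delta s k F : uniq (ends s) ->
  split_sum s k F =
  \sum_(T : {set V} | [disjoint T & endset s] && (#|T| + size s == k)%N) delta s F T.
Proof.
move=> us; rewrite /split_sum (partition_big (fun S => S :\: endset s)
   (fun T : {set V} => [disjoint T & endset s] && (#|T| + size s == k)%N)) /=; last first.
  move=> S /andP[/eqP cS ss].
  rewrite -(card_splits_endset us ss) addnC cardsID cS eqxx andbT.
  by rewrite disjoints_subset; apply/subsetP => x; rewrite !inE => /andP[].
apply: eq_bigr => T /andP[dT /eqP cT]; rewrite delta_as_sum //; apply: eq_bigl => S.
have [eS|] := eqVneq (S :\: endset s) T; rewrite ?andbF //= andbT.
case ss: (splits s S); rewrite ?andbF // andbT.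
by rewrite -[#|S|](cardsID (endset s)) (card_splits_endset us ss) eS addnC cT eqxx.
Qed.

Lemma eq_split_sum s k F1 F2 : (forall S, #|S| = k -> F1 S = F2 S) ->
  split_sum s k F1 = split_sum s k F2.
Proof. by move=> eqF; apply: eq_bigr => S /andP[/eqP/eqF-> _]. Qed.

Lemma split_sum_subsum_top s k g : uniq (ends s) ->
  split_sum s k (subsum (size s).+1 g) = delta s g set0 *+
    #|[set T : {set V} | [disjoint T & endset s] && (#|T| + size s == k)%N]|.
Proof.
move=> us; rewrite split_sum_delta // -sumr_const; apply: eq_big => [T|T /andP[dT _]].
  by rewrite inE.
exact: delta_subsum_top.
Qed.

End Differences.

Section Characterization.
Variables (V : finType) (R : numFieldType).
Implicit Types (v : V) (s : seq (V * V)) (A B S T X : {set V}) (g h G : {set V} -> R).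

Definition diffs_vanish (m l : nat) X h :=
  forall s T, uniq (ends s) -> size s = m -> endset s \subset X -> T \subset X ->
    [disjoint T & endset s] -> (#|T| + m)%N = l -> delta s h T = 0.

Lemma diffs_vanish_setU1 m l X h v : v \in X ->
  diffs_vanish m l.+1 X h -> diffs_vanish m l (X :\ v) (fun S => h (v |: S)).
Proof.
move=> vX dvh s T us sm PX TX dT cT; rewrite delta_setU1.
have YX : X :\ v \subset X by apply: subsetDl.
apply: dvh => //.
- exact: subset_trans PX YX.
- by rewrite subUset sub1set vX (subset_trans TX).
- exact: disjoint_setU1 (notin_subsetD1 PX) dT.
- by rewrite cardsU1 (notin_subsetD1 TX) addSn cT.
Qed.

Lemma diffs_vanishB_subsum m m' l X h g : (m' <= m)%N ->
  diffs_vanish m l X h -> diffs_vanish m l X (fun S => h S - subsum m' g S).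
Proof.
move=> m'm dvh s T us sm PX TX dT cT.
by rewrite deltaB delta_subsum_small ?sm // subr0 (dvh s T).
Qed.

(* For [w] in [T], the difference along [(w, v) :: s] at [T :\ w] is the one
   along [s] at [T] minus one that only reads [h] on sets through [v]. *)
Lemma diffs_vanish_drop m l X h v : v \in X -> (m <= l)%N ->
  (forall S, S \subset X :\ v -> #|S| = l -> h (v |: S) = 0) ->
  diffs_vanish m.+1 l.+1 X h -> diffs_vanish m l.+1 (X :\ v) h.
Proof.
move=> vX ml hv0 dvh s T' us sm PY T'Y dT' cT'.
have [w wT'] : exists w, w \in T'.
  by apply/set0Pn; rewrite -card_gt0; move: cT' ml; lia.
have YX : X :\ v \subset X by apply: subsetDl.
have wP : w \notin ends s by have := disjointFr dT' wT'; rewrite inE => ->.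
have vP : v \notin ends s by have := notin_subsetD1 PY; rewrite inE.
have wv : w != v by apply: contraNneq (notin_subsetD1 T'Y) => <-.
pose T := T' :\ w.
have TY : T \subset X :\ v by rewrite (subset_trans _ T'Y) ?subsetDl.
have cT : (#|T| + m)%N = l by move: cT'; rewrite (cardsD1 w T') wT' add1n addSn => -[].
have dT : [disjoint T & endset ((w, v) :: s)].
  rewrite endset_cons disjoint_sym !disjoint_setU1 //.
  - by rewrite !inE eqxx.
  - exact: notin_subsetD1 TY.
  - by rewrite disjoint_sym; apply: disjointWl dT'; apply: subsetDl.
have us' : uniq (ends ((w, v) :: s)) by rewrite uniq_ends_cons wv wP vP.
have P'X : endset ((w, v) :: s) \subset X.
  have wX : w \in X by apply/(subsetP YX)/(subsetP T'Y).
  by rewrite endset_cons !subUset !sub1set wX vX (subset_trans PY YX).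
have := dvh _ T us' _ P'X (subset_trans TY YX) dT; rewrite /= sm addnS cT.
rewrite (setD1K wT') -delta_setU1 => /(_ erefl erefl) <-.
rewrite (eq_delta_on (F2 := fun=> 0) (X := X :\ v) us TY PY) ?delta0 ?subr0 //.
- by apply: disjointWr dT; rewrite endset_cons setUA subsetUr.
- by move=> S SY cS; apply: hv0; rewrite // cS sm cT.
Qed.

(* On sets avoiding [v], [G'] is [beta * subsum m G], which [subsum m.+1] turns
   back into [subsum m G] by [subsum_subsum]; on [v |: A] it is [alpha * G A],
   chosen so that [subsum m.+1 G'] vanishes on the sets through [v], as [h] does. *)
Lemma subsum_extend m l X h G v : v \in X -> (m <= l)%N ->
  (forall S, S \subset X :\ v -> #|S| = l -> h (v |: S) = 0) ->
  (forall S, S \subset X :\ v -> #|S| = l.+1 -> h S = subsum m G S) ->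
  exists G', forall S, S \subset X -> #|S| = l.+1 -> h S = subsum m.+1 G' S.
Proof.
move=> vX ml hv0 hG.
pose beta : R := (l.+1 - m.-1)%:R^-1.
pose alpha : R := - (beta * (l - m.-1)%:R).
exists (fun A => if v \in A then alpha * G (A :\ v) else beta * subsum m G A).
move=> S SX cS; have [vS|vS] := boolP (v \in S); last first.
  have SY : S \subset X :\ v by rewrite subsetD1 SX.
  rewrite hG // [RHS](eq_subsum (g2 := fun A => beta * subsum m G A)); last first.
    by move=> A AS _ /=; rewrite (negbTE (contra (subsetP AS v) vS)).
  rewrite subsumZ subsum_subsum cS mulrA mulVf ?mul1r //.
  by rewrite pnatr_eq0 -lt0n subn_gt0 ltnS (leq_trans (leq_pred m) ml).
pose S0 := S :\ v.
have vS0 : v \notin S0 by rewrite setD11.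
have S0Y : S0 \subset X :\ v by apply: setSD.
have cS0 : #|S0| = l by move: cS; rewrite (cardsD1 v S) vS => -[].
rewrite -(setD1K vS) hv0 // subsum_setU1 //.
rewrite (eq_subsum (g2 := fun A => beta * subsum m G A)); last first.
  by move=> A AS _ /=; rewrite (negbTE (contra (subsetP AS v) vS0)).
rewrite (eq_subsum (m := m) (g2 := fun B => alpha * G B)); last first.
  by move=> B BS _ /=; rewrite setU11 setU1K // (contra (subsetP BS v) vS0).
by rewrite !subsumZ subsum_subsum -/S0 cS0 mulrA -mulrDl addrN mul0r.
Qed.

Lemma diffs_vanish_subsum m l X h : (m <= l.+1)%N -> (l + m <= #|X|)%N ->
  diffs_vanish m l X h ->
  exists g, forall S, S \subset X -> #|S| = l -> h S = subsum m g S.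
Proof.
elim: m l X h => [|m IHm] l X h ml lX dvh.
  exists (fun _ => 0) => S SX cS; rewrite subsum0.
  have := dvh [::] S isT erefl; rewrite /endset set_nil addn0 sub0set.
  by rewrite disjoints_subset setC0 subsetT; apply.
elim: l X h ml lX dvh => [|l IHl] X h ml lX dvh.
  by exists h => S _ cS; rewrite subsum_full // cS; case: m ml {IHm lX dvh}.
have [ml_eq|ml'] := eqVneq m.+1 l.+2.
  by exists h => S _ cS; rewrite subsum_full // cS ml_eq.
have {}ml : (m <= l)%N.
  by move: ml ml'; rewrite !ltnS leq_eqVlt => /predU1P[->|]; rewrite ?eqxx.
have [v vX] : exists v, v \in X.
  by apply/set0Pn; rewrite -card_gt0; apply: leq_trans lX; rewrite addnS.
have cX : #|X| = #|X :\ v|.+1 by rewrite (cardsD1 v X) vX.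
have [gv hgv] : exists gv, forall S, S \subset X :\ v -> #|S| = l ->
    h (v |: S) = subsum m.+1 gv S.
  by apply: IHl (diffs_vanish_setU1 vX dvh); lia.
pose g A := if v \in A then 0 else gv A.
pose h' S := h S - subsum m.+1 g S.
have h'v0 S : S \subset X :\ v -> #|S| = l -> h' (v |: S) = 0.
  move=> SY cS; have vS := notin_subsetD1 SY.
  rewrite /h' subsum_setU1 // [subsum m _ _]big1 => [|B _]; last by rewrite /g setU11.
  rewrite addr0 hgv // -(eq_subsum (g1 := gv)) ?subrr //.
  by move=> A AS _; rewrite /g (negbTE (contra (subsetP AS v) vS)).
have [G hG] : exists G, forall S, S \subset X :\ v -> #|S| = l.+1 ->
    h' S = subsum m G S.
  by apply: IHm (diffs_vanish_drop vX ml h'v0 (diffs_vanishB_subsum _ (leqnn _) dvh)); lia.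
have [G' hG'] := subsum_extend vX ml h'v0 hG.
exists (fun A => G' A + g A) => S SX cS.
by rewrite subsumD -hG' // subrK.
Qed.

End Characterization.

Section Uniqueness.
Variables (V : finType) (R : numDomainType).
Implicit Types (v w : V) (A B Q S X : {set V}).

(* Exchanging one element at a time walks between any two sets of the same size. *)
Lemma const_on_swap (T : Type) X n (g : {set V} -> T) :
  (forall v w B, v \in X -> w \in X -> v \notin B -> w \notin B -> B \subset X ->
     #|B| = n -> g (v |: B) = g (w |: B)) ->
  forall A A', A \subset X -> A' \subset X -> #|A| = n.+1 -> #|A'| = n.+1 -> g A = g A'.
Proof.
move=> g_swap A A' + A'X + cA'.
elim: {A}_.+1 {-2}A (ltnSn #|A :\: A'|) => // d IHd A.
rewrite ltnS => cAA' AX cA.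
have [sAA'|/subsetPn[w wA wA']] := boolP (A \subset A').
  suff -> : A = A' by [].
  by apply/eqP; rewrite eqEcard sAA' cA cA' /=.
have [v vA' vA] : exists2 v, v \in A' & v \notin A.
  apply/subsetPn; apply: contra wA' => sA'A.
  suff -> : A' = A by [].
  by apply/eqP; rewrite eqEcard sA'A cA cA' /=.
have BX : A :\ w \subset X by rewrite (subset_trans _ AX) ?subsetDl.
have cB : #|A :\ w| = n by move: cA; rewrite (cardsD1 w A) wA => -[].
have vB : v \notin A :\ w by rewrite inE negb_and vA orbT.
have wB : w \notin A :\ w by rewrite setD11.
rewrite -(setD1K wA) -(g_swap v w _ (subsetP A'X v vA') (subsetP AX w wA) vB wB BX cB).
apply: IHd; last by rewrite cardsU1 vB cB.
- have -> : (v |: (A :\ w)) :\: A' = (A :\: A') :\ w.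
    apply/setP => x; rewrite !inE.
    by case: (x =P v) => [->|]; rewrite ?vA' ?andbF //= andbCA.
  by apply: leq_trans cAA'; rewrite (cardsD1 w (A :\: A')) !inE wA wA'.
- by rewrite subUset sub1set (subsetP A'X) ?BX.
Qed.

Lemma subsum_swap_eq0 j k X (g : {set V} -> R) v w : v \in X -> w \in X ->
  (forall Q, Q \subset X -> #|Q| = k.+1 -> subsum j.+2 g Q = 0) ->
  forall Q, Q \subset X :\: [set v; w] -> #|Q| = k ->
    subsum j.+1 (fun B => g (v |: B) - g (w |: B)) Q = 0.
Proof.
move=> vX wX gQ Q QY cQ.
have QX : Q \subset X by apply: subset_trans QY (subsetDl _ _).
have xQ x : x \in [set v; w] -> x \notin Q.
  by move=> xvw; apply: contraL xvw => /(subsetP QY); rewrite inE => /andP[].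
have vQ : v \notin Q by rewrite xQ ?set21.
have wQ : w \notin Q by rewrite xQ ?set22.
have gQx x : x \in X -> x \notin Q ->
    subsum j.+1 (fun B => g (x |: B)) Q = - subsum j.+2 g Q.
  move=> xX xQ'; apply/eqP; rewrite -addr_eq0 addrC -subsum_setU1 //.
  by rewrite gQ ?cardsU1 ?xQ' ?cQ // subUset sub1set xX.
by rewrite subsumB !gQx ?subrr.
Qed.

Lemma eq0_of_subsum_eq0 j k X (g : {set V} -> R) : (j <= k)%N -> (j + k <= #|X|)%N ->
  (forall Q, Q \subset X -> #|Q| = k -> subsum j.+1 g Q = 0) ->
  forall A, A \subset X -> #|A| = j -> g A = 0.
Proof.
elim: j k X g => [|j IHj] k X g jk jX gQ A AX cA.
  have [Q QX cQ] := exists_subset jX; have := gQ Q QX cQ.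
  by rewrite subsum1 (_ : A = set0) //; apply/eqP; rewrite -cards_eq0 cA.
have [k' def_k] : exists k', k = k'.+1 by exists k.-1; rewrite prednK //; lia.
have g_swap v w B : v \in X -> w \in X -> v \notin B -> w \notin B -> B \subset X ->
    #|B| = j -> g (v |: B) = g (w |: B).
  move=> vX wX vB wB BX cB; have [->//|vw] := eqVneq v w.
  apply/eqP; rewrite -subr_eq0; apply/eqP.
  have cY : #|X :\: [set v; w]| = (#|X| - 2)%N.
    by rewrite cardsDS ?cards2 ?vw // subUset !sub1set vX wX.
  apply: (IHj k' _ _ _ _ (subsum_swap_eq0 vX wX _)) => //; try lia.
  - by move=> Q QX cQ; rewrite gQ // def_k.
  - apply/subsetP => x xB; rewrite !inE (subsetP BX) // andbT negb_or.
    by apply/andP; split; apply: contraTneq xB => ->.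
have [Q QX cQ] : exists2 Q : {set V}, Q \subset X & #|Q| = k by apply: exists_subset; lia.
have [B0 B0Q cB0] : exists2 B : {set V}, B \subset Q & #|B| = j.+1.
  by apply: exists_subset; rewrite cQ.
have := gQ Q QX cQ; rewrite /subsum (eq_bigr (fun _ => g A)); last first.
  move=> B /andP[BQ /eqP[cB]]; apply: (const_on_swap g_swap) => //.
  exact: subset_trans BQ QX.
rewrite sumr_const => /eqP; rewrite mulrn_eq0 => /orP[/eqP c0|/eqP //].
suff : (0 < #|[pred B : {set V} | (B \subset Q) && (#|B|.+1 == j.+2)%N]|)%N by rewrite c0.
by apply/card_gt0P; exists B0; rewrite inE /= B0Q cB0 eqxx.
Qed.

End Uniqueness.

Section Representation.
Variables (V : finType) (R : numFieldType).
Implicit Types (s : seq (V * V)) (S T : {set V}) (f h : {set V} -> R).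

Lemma delta_eq0_of_split_sum_eq0 s k h :
  uniq (ends s) -> (size s <= k)%N -> (2 * k <= #|V|)%N ->
  split_sum s k (subsum (size s).+1 h) = 0 -> delta s h set0 = 0.
Proof.
move=> us sk kV; rewrite split_sum_subsum_top // => /eqP.
rewrite mulrn_eq0 => /orP[|/eqP //]; rewrite cards_eq0 => /eqP T_set0.
have [T TP cT] : exists2 T : {set V}, T \subset ~: endset s & #|T| = (k - size s)%N.
  by apply: exists_subset; rewrite cardsCs setCK card_endset //; lia.
suff : T \in set0 by rewrite inE.
by rewrite -T_set0 inE disjoints_subset TP cT subnK ?eqxx.
Qed.

Lemma subsum_descend r k f h : (r <= k)%N -> (2 * k <= #|V|)%N ->
  (forall s, uniq (ends s) -> size s = r -> split_sum s k f = 0) ->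
  (forall T, #|T| = k -> f T = subsum r.+1 h T) ->
  exists h', forall T, #|T| = k -> f T = subsum r h' T.
Proof.
move=> rk kV ss0 fh.
have [g hg] : exists g, forall S, S \subset setT -> #|S| = r -> h S = subsum r g S.
  apply: diffs_vanish_subsum => //; first by rewrite cardsT; lia.
  move=> s T us sr _ _ _ cT; have -> : T = set0 by apply/eqP; rewrite -cards_eq0; lia.
  apply: (delta_eq0_of_split_sum_eq0 (k := k)); rewrite ?sr //.
  by rewrite -(ss0 s us sr); apply: eq_split_sum => S /fh.
exists (fun A => (k - r.-1)%:R * g A) => T cT.
rewrite fh // subsumZ -cT -subsum_subsum; apply: eq_subsum => B _ [cB].
by rewrite hg ?subsetT.
Qed.

Lemma subsum_of_split_sums_eq0 k l f : (l <= k)%N -> (2 * k <= #|V|)%N ->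
  (forall r, (l <= r <= k)%N ->
     forall s, uniq (ends s) -> size s = r -> split_sum s k f = 0) ->
  exists h, forall T, #|T| = k -> f T = subsum l h T.
Proof.
move=> lk kV ss0.
suff fr d r : (r + d = k.+1)%N -> (l <= r)%N ->
    exists h, forall T, #|T| = k -> f T = subsum r h T.
  by apply: (fr (k.+1 - l)%N); lia.
elim: d r => [|d IHd] r rd lr.
  by exists f => T cT; rewrite subsum_full // cT -rd addn0.
have [h fh] : exists h, forall T, #|T| = k -> f T = subsum r.+1 h T.
  by apply: IHd; lia.
apply: subsum_descend fh; [lia | done |].
by apply: ss0; apply/andP; split; lia.
Qed.

End Representation.

Section Weights.
Variables (R : realType) (V : finType).
Implicit Types (s : seq (V * V)) (S : {set V}) (f : {set V} -> R).

Definition pairs_of_perm r (p : {ffun 'I_r * bool -> V}) : seq (V * V) :=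
  [seq (pa p i, pb p i) | i <- enum 'I_r].

Definition perm_of_pairs s : {ffun 'I_(size s) * bool -> V} :=
  [ffun x => if x.2 then (tnth (in_tuple s) x.1).2 else (tnth (in_tuple s) x.1).1].

Lemma perm_of_pairsK s : pairs_of_perm (perm_of_pairs s) = s.
Proof.
rewrite /pairs_of_perm -[RHS](map_tnth_enum (in_tuple s)); apply: eq_map => i.
by rewrite /pa /pb !ffunE /=; case: (tnth _ i).
Qed.

Lemma size_pairs_of_perm r (p : {ffun 'I_r * bool -> V}) : size (pairs_of_perm p) = r.
Proof. by rewrite size_map size_enum_ord. Qed.

Lemma uniq_ends_pairs_of_perm r (p : {ffun 'I_r * bool -> V}) :
  uniq (ends (pairs_of_perm p)) = injectiveb p.
Proof.
have -> : ends (pairs_of_perm p) =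
    map p [seq (i, b) | i <- enum 'I_r, b <- [:: false; true]].
  by rewrite /ends /pairs_of_perm map_flatten -!map_comp.
apply/perm_uniq/perm_map/uniq_perm => [||[i b]]; rewrite ?enum_uniq ?mem_enum //.
  by apply: allpairs_uniq; rewrite ?enum_uniq // => -[? ?] [? ?] _ _ [-> ->].
by apply/allpairsP; exists (i, b); rewrite mem_enum; case: b.
Qed.

Lemma goodR_splits k r (p : {ffun 'I_r * bool -> V}) S : injective p ->
  (S \in goodR k p) = (#|S| == k) && splits (pairs_of_perm p) S.
Proof.
move=> ip; rewrite inE /splits all_map; congr (_ && _).
have pab i : pa p i != pb p i by rewrite (inj_eq ip) xpair_eqE andbF.
apply/forallP/allP => [pS i _|pS i] /=; first by rewrite -card_setI2_eq1 ?pS.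
by rewrite card_setI2_eq1 //; apply: pS; rewrite mem_enum.
Qed.

Lemma seconds_pairs_of_perm r (p : {ffun 'I_r * bool -> V}) :
  seconds (pairs_of_perm p) = [set pb p i | i : 'I_r].
Proof.
apply/setP => y; rewrite inE -map_comp; apply/mapP/imsetP => -[i _ ->]; exists i => //.
by rewrite mem_enum.
Qed.

Lemma inner_eq0 k r f (p : {ffun 'I_r * bool -> V}) : injective p ->
  (inner k f p == 0) = (split_sum (pairs_of_perm p) k f == 0).
Proof.
move=> ip; rewrite /inner /avg /split_sum -seconds_pairs_of_perm.
rewrite (eq_bigl _ _ (fun S => goodR_splits k S ip)) mulf_eq0 invr_eq0 pnatr_eq0.
rewrite cards_eq0 orb_idr // => /eqP goodR0; apply/eqP/big_pred0 => S.
by rewrite -goodR_splits // goodR0 inE.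
Qed.

Lemma W_eq0_inner k r f :
  W k r f = 0 <-> forall p, p \in perms V r -> inner k f p = 0.
Proof.
rewrite /W /avg; split => [/eqP|inner0]; last first.
  by rewrite big1 ?mul0r ?sqrtr0 // => p /inner0 ->; rewrite expr0n.
rewrite sqrtr_eq0 => avg_le0 p pP.
have perms_gt0 : (0 < #|perms V r|)%N by apply/card_gt0P; exists p.
have sq_ge0 q : q \in perms V r -> 0 <= inner k f q ^+ 2 by move=> _; apply: sqr_ge0.
have /(psumr_eq0P sq_ge0)/(_ p pP)/eqP : \sum_(q in perms V r) inner k f q ^+ 2 = 0.
  apply/eqP; rewrite eq_le sumr_ge0 // andbT.
  by rewrite -(pmulr_lle0 _ (_ : 0 < #|perms V r|%:R^-1)) ?invr_gt0 ?ltr0n.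
by rewrite sqrf_eq0 => /eqP.
Qed.

Lemma W_eq0_split_sum k r f : W k r f = 0 <->
  forall s, uniq (ends s) -> size s = r -> split_sum s k f = 0.
Proof.
rewrite W_eq0_inner; split => [inner0 s us sr|ss0 p]; first subst r.
  rewrite -(perm_of_pairsK s); apply/eqP; rewrite -inner_eq0; last first.
    by apply/injectiveP; rewrite -uniq_ends_pairs_of_perm perm_of_pairsK.
  by rewrite inner0 // inE -uniq_ends_pairs_of_perm perm_of_pairsK.
rewrite inE => /injectiveP ip; apply/eqP; rewrite inner_eq0 // ss0 ?size_pairs_of_perm //.
by rewrite uniq_ends_pairs_of_perm; apply/injectiveP.
Qed.

End Weights.

Unset Implicit Arguments.

Theorem proposition2p4 (R : realType) (V : finType) (k l : nat)
  (hlk : (l <= k)%N) (hV : (2 * k <= #|V|)%N) (f : {set V} -> R) :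
  (forall r : nat, (l <= r <= k)%N -> W k r f = 0) <->
  (exists h : {set V} -> R,
     represents k l f h /\
     forall h' : {set V} -> R, represents k l f h' ->
       forall S : {set V}, #|S|.+1 = l -> h' S = h S).
Proof.
split=> [W0|[h [fh _]] r /andP[lr rk]].
  have [h fh] := subsum_of_split_sums_eq0 hlk hV
    (fun r lrk => (W_eq0_split_sum k r f).1 (W0 r lrk)).
  exists h; split=> // h' fh' S cS; apply/eqP; rewrite -subr_eq0; apply/eqP.
  apply: (eq0_of_subsum_eq0 (j := #|S|) (k := k) (X := [set: V])
    (g := fun A => h' A - h A)); rewrite ?subsetT ?cardsT //; try lia.
  move=> Q _ cQ; rewrite cS subsumB.
  by rewrite -(fh Q cQ : _ = subsum l h Q) -(fh' Q cQ : _ = subsum l h' Q) subrr.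
apply/W_eq0_split_sum => s us sr.
rewrite (eq_split_sum _ fh) split_sum_delta // big1 // => T _.
by apply: delta_subsum_small; rewrite ?sr.
Qed.
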